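(* Let $P$ be a finite poset and $t\geq 2$ a fixed integer. Then either $\mathrm{sat}^{\star}([t]^n,P)=O(1)$ as $n\to\infty$, or $\mathrm{sat}^{\star}([t]^n,P)\geq\log_t(n)$ for all $n$.
   Context: For positive integers $n,t$, $[n]=\{1,\dots,n\}$ and the hypergrid $[t]^n$ is the set of functions $f:[n]\to[t]$, partially ordered by $f\leq g$ iff $f(i)\leq g(i)$ for all $i\in[n]$. An induced copy of a poset $P$ in a family $\mathcal{F}\subseteq[t]^n$ is an injective map $\phi:P\to\mathcal{F}$ such that $\phi(x)\leq\phi(y)$ iff $x\leq_P y$. A family $\mathcal{F}\subseteq[t]^n$ is induced $P$-free if it contains no induced copy of $P$; it is induced $P$-saturated if it is induced $P$-free and for every $f\in[t]^n\setminus\mathcal{F}$ the family $\mathcal{F}\cup\{f\}$ contains an induced copy of $P$. Whenever $P$ embeds as an induced subposet of $[t]^n$, $\mathrm{sat}^{\star}([t]^n,P)$ denotes the minimum size of an induced $P$-saturated family in $[t]^n$. *)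

From HB Require Import structures.
From mathcomp Require Import all_boot all_order.
From Stdlib Require Import Reals.
Set Implicit Arguments. Unset Strict Implicit. Unset Printing Implicit Defensive.

(* The hypergrid [t]^n : functions [n] -> [t]; we use 'I_n = {0..n-1} and
   'I_t = {0..t-1} in place of {1..n}, {1..t} (order-isomorphic relabeling). *)
Definition grid (t n : nat) := {ffun 'I_n -> 'I_t}.

Definition grid_le (t n : nat) (f g : grid t n) : bool :=
  [forall i, (f i <= g i)%N].

Definition has_induced_copy (d : Order.disp_t) (P : finPOrderType d)
    (t n : nat) (F : {set grid t n}) : Prop :=
  exists phi : P -> grid t n,
    [/\ injective phi,
        (forall x, phi x \in F) &
        (forall x y, grid_le (phi x) (phi y) = (x <= y)%O)].

Definition embeds (d : Order.disp_t) (P : finPOrderType d) (t n : nat) : Prop :=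
  has_induced_copy P [set: grid t n].

Definition induced_free (d : Order.disp_t) (P : finPOrderType d)
    (t n : nat) (F : {set grid t n}) : Prop :=
  ~ has_induced_copy P F.

Definition induced_saturated (d : Order.disp_t) (P : finPOrderType d)
    (t n : nat) (F : {set grid t n}) : Prop :=
  induced_free P F /\
  (forall f : grid t n, f \notin F -> has_induced_copy P (f |: F)).

(* is_satstar P t n m : m = sat^*([t]^n, P), i.e. m is the minimum size of
   an induced P-saturated family in [t]^n (only meaningful when it exists). *)
Definition is_satstar (d : Order.disp_t) (P : finPOrderType d)
    (t n m : nat) : Prop :=
  (exists F : {set grid t n}, induced_saturated P F /\ #|F| = m) /\
  (forall F : {set grid t n}, induced_saturated P F -> (m <= #|F|)%N).

From HB Require Import structures.
From mathcomp Require Import all_boot all_order.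
From Stdlib Require Import Reals Lra Classical.
Set Implicit Arguments. Unset Strict Implicit. Unset Printing Implicit Defensive.

(* If a saturated family F in [t]^n0 has t^|F| < n0, then by pigeonhole two
   coordinates i <> j are "twins": every member of F agrees on them.  Copying
   coordinate i into new coordinates carries F to a saturated family of the
   same size in [t]^N for every N >= n0.  Saturation survives because a new
   point g of [t]^N collapses to a point of [t]^n0 that compares with each
   member of F exactly as g compares with the member's copy.  So either sat*
   is eventually bounded, or t^sat*([t]^n, P) >= n for every n. *)

Lemma grid_le_refl t n (f : grid t n) : grid_le f f.
Proof. exact/forallP. Qed.

Section InducedCopies.
Variables (d : Order.disp_t) (P : finPOrderType d).

Lemma order_embedding_inj t n (phi : P -> grid t n) :
  (forall x y, grid_le (phi x) (phi y) = (x <= y)%O) -> injective phi.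
Proof.
move=> phi_le x y e; apply/Order.POrderTheory.le_anti.
by rewrite -!phi_le e !grid_le_refl.
Qed.

Lemma induced_copy_transfer t n t' n' (A : {set grid t n}) (B : {set grid t' n'})
    (e : grid t n -> grid t' n') :
  {in A, forall f, e f \in B} ->
  {in A &, forall f f', grid_le (e f) (e f') = grid_le f f'} ->
  has_induced_copy P A -> has_induced_copy P B.
Proof.
move=> eAB e_le [phi [_ phiA phi_le]].
have e_phi_le x y : grid_le (e (phi x)) (e (phi y)) = (x <= y)%O.
  by rewrite e_le ?phiA.
by exists (e \o phi); split=> // [|x]; [exact: order_embedding_inj | exact: eAB].
Qed.

End InducedCopies.

Section Stretch.
Variables (t n N : nat) (le_nN : (n <= N)%N) (i : 'I_n).

(* Coordinates p >= n of [t]^N are read as copies of coordinate i. *)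
Definition fold_index (p : 'I_N) : 'I_n := insubd i (val p).

Lemma fold_widen l : fold_index (widen_ord le_nN l) = l.
Proof. by apply: val_inj; rewrite /fold_index val_insubd /= ltn_ord. Qed.

Lemma widen_fold p : fold_index p != i -> widen_ord le_nN (fold_index p) = p.
Proof.
move=> fp_i; apply: val_inj; rewrite /= /fold_index val_insubd.
case: ifP => // p_big; case/eqP: fp_i; apply: val_inj.
by rewrite /fold_index val_insubd p_big.
Qed.

Definition stretch (f : grid t n) : grid t N := [ffun p => f (fold_index p)].

Lemma stretchE f p : stretch f p = f (fold_index p).
Proof. by rewrite ffunE. Qed.

Definition restrict (g : grid t N) : grid t n := [ffun l => g (widen_ord le_nN l)].

Lemma stretchK : cancel stretch restrict.
Proof. by move=> f; apply/ffunP => l; rewrite !ffunE fold_widen. Qed.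

Lemma grid_le_stretch f f' : grid_le (stretch f) (stretch f') = grid_le f f'.
Proof.
apply/forallP/forallP => le_ff' l; last by rewrite !ffunE.
by have := le_ff' (widen_ord le_nN l); rewrite !ffunE fold_widen.
Qed.

End Stretch.

Section Collapse.
Variables (t n N : nat) (le_nN : (n <= N)%N) (i j : 'I_n) (neq_ij : i != j).
Variable g : grid t N.

Local Notation fold := (@fold_index n N i).
Local Notation widen := (widen_ord le_nN).
Local Notation stretch := (stretch N i).

Definition twin_block (p : 'I_N) := (fold p == i) || (fold p == j).

Definition block_top := [arg max_(p > widen i | twin_block p) g p].
Definition block_bot := [arg min_(p < widen i | twin_block p) g p].

Lemma twin_block_widen_i : twin_block (widen i).
Proof. by rewrite /twin_block fold_widen eqxx. Qed.

Lemma twin_block_top : twin_block block_top.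
Proof. by rewrite /block_top; case: arg_maxnP => //; exact: twin_block_widen_i. Qed.

Lemma twin_block_bot : twin_block block_bot.
Proof. by rewrite /block_bot; case: arg_minnP => //; exact: twin_block_widen_i. Qed.

Lemma le_block_top p : twin_block p -> (g p <= g block_top)%N.
Proof.
rewrite /block_top; case: arg_maxnP => [|q _ maxq]; last exact: maxq.
exact: twin_block_widen_i.
Qed.

Lemma block_bot_le p : twin_block p -> (g block_bot <= g p)%N.
Proof.
rewrite /block_bot; case: arg_minnP => [|q _ minq]; last exact: minq.
exact: twin_block_widen_i.
Qed.

(* Against a stretched f with f i = f j, comparing g amounts to comparing the
   block maximum (for g <= stretch f) or the block minimum (for stretch f <= g)
   with f i; collapse records both, at i and at j. *)
Definition collapse : grid t n :=
  [ffun l => if l == i then g block_top else if l == j then g block_bot else g (widen l)].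

Lemma collapse_i : collapse i = g block_top.
Proof. by rewrite ffunE eqxx. Qed.

Lemma collapse_j : collapse j = g block_bot.
Proof. by rewrite ffunE eq_sym (negbTE neq_ij) eqxx. Qed.

Lemma collapse_widen l : l != i -> l != j -> collapse l = g (widen l).
Proof. by move=> /negbTE l_i /negbTE l_j; rewrite ffunE l_i l_j. Qed.

Lemma collapse_fold p : ~~ twin_block p -> collapse (fold p) = g p.
Proof.
by rewrite negb_or => /andP[p_i p_j]; rewrite collapse_widen // widen_fold.
Qed.

Lemma stretch_twin_block (f : grid t n) p :
  f i = f j -> twin_block p -> stretch f p = f i.
Proof. by move=> fij; rewrite stretchE => /orP[]/eqP->. Qed.

Lemma grid_le_stretch_collapse (f : grid t n) :
  f i = f j -> grid_le g (stretch f) = grid_le collapse f.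
Proof.
move=> fij; apply/forallP/forallP => le_g l.
- have g_top_le : (g block_top <= f i)%N.
    by rewrite -(stretch_twin_block fij twin_block_top).
  case: (eqVneq l i) => [-> | l_i]; first by rewrite collapse_i.
  case: (eqVneq l j) => [-> | l_j].
    by rewrite collapse_j -fij (leq_trans (le_block_top twin_block_bot)).
  by rewrite collapse_widen //; have := le_g (widen l); rewrite stretchE fold_widen.
- case: (boolP (twin_block l)) => [bl | nbl].
    rewrite stretch_twin_block // (leq_trans (le_block_top bl)) //.
    by rewrite -collapse_i; apply: le_g.
  by rewrite -collapse_fold // stretchE; apply: le_g.
Qed.

Lemma grid_le_collapse_stretch (f : grid t n) :
  f i = f j -> grid_le (stretch f) g = grid_le f collapse.
Proof.
move=> fij; apply/forallP/forallP => le_g l.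
- have le_g_bot : (f i <= g block_bot)%N.
    by rewrite -(stretch_twin_block fij twin_block_bot).
  case: (eqVneq l i) => [-> | l_i].
    by rewrite collapse_i (leq_trans le_g_bot (block_bot_le twin_block_top)).
  case: (eqVneq l j) => [-> | l_j]; first by rewrite collapse_j -fij.
  by rewrite collapse_widen //; have := le_g (widen l); rewrite stretchE fold_widen.
- case: (boolP (twin_block l)) => [bl | nbl].
    rewrite stretch_twin_block // (leq_trans _ (block_bot_le bl)) //.
    by rewrite -collapse_j fij; apply: le_g.
  by rewrite -collapse_fold // stretchE; apply: le_g.
Qed.

Lemma stretch_collapse : collapse i = collapse j -> stretch collapse = g.
Proof.
rewrite collapse_i collapse_j => top_bot; apply/ffunP => p.
case: (boolP (twin_block p)) => [bp | nbp]; last by rewrite stretchE collapse_fold.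
rewrite stretch_twin_block ?collapse_i ?collapse_j //; apply/val_inj/eqP.
by rewrite eqn_leq le_block_top //= top_bot block_bot_le.
Qed.

End Collapse.

Section StretchSaturated.
Variables (d : Order.disp_t) (P : finPOrderType d).
Variables (t n N : nat) (le_nN : (n <= N)%N) (i j : 'I_n) (neq_ij : i != j).
Variable F : {set grid t n}.
Hypothesis twinF : {in F, forall f : grid t n, f i = f j}.

Local Notation stretch := (stretch N i).

Lemma card_stretch : #|stretch @: F| = #|F|.
Proof. exact/card_imset/(can_inj (stretchK le_nN i)). Qed.

Lemma stretch_free : induced_free P F -> induced_free P (stretch @: F).
Proof.
move=> freeF copy; apply: freeF.
apply: (induced_copy_transfer (e := restrict le_nN) _ _ copy).
  by move=> _ /imsetP[f fF ->]; rewrite stretchK.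
by move=> _ _ /imsetP[f _ ->] /imsetP[f' _ ->]; rewrite !stretchK grid_le_stretch.
Qed.

Lemma stretch_saturating :
    (forall h, h \notin F -> has_induced_copy P (h |: F)) ->
  forall g, g \notin stretch @: F -> has_induced_copy P (g |: stretch @: F).
Proof.
move=> satF g g_out; set h := collapse le_nN i j g.
have h_out : h \notin F.
  apply: contra g_out => hF.
  by rewrite -(stretch_collapse neq_ij (g := g)) ?twinF // imset_f.
have neq_h f : f \in F -> (f == h) = false.
  by move=> fF; apply: contraNF h_out => /eqP <-.
pose e f := if f == h then g else stretch f.
apply: (induced_copy_transfer (e := e) _ _ (satF _ h_out)).
  move=> f /setU1P[-> | fF]; rewrite /e; first by rewrite eqxx setU11.
  by rewrite neq_h // setU1r // imset_f.
move=> f f' /setU1P[-> | fF] /setU1P[-> | f'F]; rewrite /e ?eqxx ?grid_le_refl ?neq_h //.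
- by rewrite (grid_le_stretch_collapse le_nN neq_ij) ?twinF.
- by rewrite (grid_le_collapse_stretch le_nN neq_ij) ?twinF.
- by rewrite grid_le_stretch.
Qed.

Lemma stretch_saturated :
  induced_saturated P F -> induced_saturated P (stretch @: F).
Proof.
by case=> freeF satF; split; [exact: stretch_free | exact: stretch_saturating].
Qed.

End StretchSaturated.

Lemma exists_twin_coords t n (F : {set grid t n}) : (expn t #|F| < n)%N ->
  exists i j : 'I_n, i != j /\ {in F, forall f : grid t n, f i = f j}.
Proof.
move=> small_F.
pose column (l : 'I_n) : {ffun 'I_#|F| -> 'I_t} :=
  [ffun k => (enum_val k : grid t n) l].
have : ~~ injectiveb column.
  apply/negP => /injectiveP/leq_card; rewrite card_ffun !card_ord.
  by rewrite leqNgt small_F.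
case/injectivePn => i [j neq_ij col_ij]; exists i, j; split=> // f fF.
by move/ffunP: col_ij => /(_ (enum_rank_in fF f)); rewrite !ffunE enum_rankK_in.
Qed.

Lemma satstar_le_of_small_witness d (P : finPOrderType d) t n0 m0 N m :
  is_satstar P t n0 m0 -> (expn t m0 < n0)%N -> (n0 <= N)%N ->
  is_satstar P t N m -> (m <= m0)%N.
Proof.
move=> [[F [satF <-]] _] small_F le_n0N [_ min_m].
have [i [j [neq_ij twinF]]] := exists_twin_coords small_F.
rewrite -(card_stretch le_n0N i F); apply: min_m.
exact: (stretch_saturated le_n0N neq_ij twinF satF).
Qed.

Lemma INR_expn a m : INR (expn a m) = (INR a ^ m)%R.
Proof. by elim: m => // m IH; rewrite expnS -multE mult_INR IH. Qed.

Lemma ln_div_ln_le_of_le_expn t n m :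
  (1 < t)%N -> (0 < n)%N -> (n <= expn t m)%N -> (ln (INR n) / ln (INR t) <= INR m)%R.
Proof.
move=> /ltP/(lt_INR 1)/= t_gt1 /ltP/lt_0_INR n_gt0 /leP/le_INR.
rewrite INR_expn => n_le.
have ln_t_gt0 : (0 < ln (INR t))%R by rewrite -ln_1; apply: ln_increasing; lra.
have ln_n_le : (ln (INR n) <= ln (INR t ^ m))%R.
  case: (Rle_lt_or_eq_dec _ _ n_le) => [n_lt | ->]; last exact: Rle_refl.
  exact/Rlt_le/ln_increasing.
rewrite ln_pow in ln_n_le; last lra.
apply: (Rmult_le_reg_r _ _ _ ln_t_gt0).
by rewrite /Rdiv Rmult_assoc Rinv_l ?Rmult_1_r //; lra.
Qed.

Theorem mainTheorem7 (d : Order.disp_t) (P : finPOrderType d) (t : nat) :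
  (2 <= t)%N ->
  (* sat^*([t]^n, P) = O(1) as n -> oo *)
  (exists C N : nat, forall n m : nat, (N <= n)%N -> embeds P t n ->
      is_satstar P t n m -> (m <= C)%N)
  \/
  (* sat^*([t]^n, P) >= log_t n for all n (for which it is defined) *)
  (forall n m : nat, (1 <= n)%N -> embeds P t n -> is_satstar P t n m ->
      (ln (INR n) / ln (INR t) <= INR m)%R).
Proof.
move=> t_ge2.
case: (classic (exists n0 m0, is_satstar P t n0 m0 /\ (expn t m0 < n0)%N)).
  move=> [n0 [m0 [sat0 small0]]]; left; exists m0, n0 => N m le_n0N _.
  exact: satstar_le_of_small_witness sat0 small0 le_n0N.
move=> no_small; right => n m n_gt0 _ sat_nm.
apply: ln_div_ln_le_of_le_expn => //; rewrite leqNgt.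
by apply/negP => small; apply: no_small; exists n, m.
Qed.
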